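(* Let $n\in\mathbb{N}$ with $n\ge 2$, and let $\alpha:=\frac{n+\sqrt{n^2+4}}{2}$, $\gamma:=1/\alpha$, $\tau:=\log\alpha/\log n$. Then the number $\alpha-n=\frac{\sqrt{n^2+4}-n}{2}\in(0,1)$ is an isolated point of $D_{\gamma,\tau}\cap[0,1]$.
   Context: For $\gamma>0$ and $\tau\ge 1$, the Diophantine set $D_{\gamma,\tau}$ is the set of all real numbers $\xi$ such that $|\xi q-p|\ge \gamma/q^{\tau}$ for all $p\in\mathbb{Z}$ and all $q\in\mathbb{N}=\{1,2,3,\dots\}$. *)

From Stdlib Require Import Reals Lra Lia ZArith.
Open Scope R_scope.

Definition Diophantine (gamma tau : R) (xi : R) : Prop :=
  forall (p : Z) (q : nat), (1 <= q)%nat ->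
    Rabs (xi * INR q - IZR p) >= gamma / Rpower (INR q) tau.

Definition isolated_point (S : R -> Prop) (x : R) : Prop :=
  S x /\ exists eps : R, eps > 0 /\
    forall y : R, S y -> Rabs (y - x) < eps -> y = x.

(* Write x := alpha - n = 1/alpha, so that n x + x^2 = 1 and n^tau = alpha = 1/x.
   For q < n p the bound |x q - p| >= x is immediate; otherwise, with q = n p + r,
   x q - p = -x (x p - r), so by strong induction on q (as p < q)
   |x q - p| = x |x p - r| >= x^2 / p^tau = x / (n p)^tau >= x / q^tau.  This is the recursion of the continued
   fraction [0; n, n, ...].  Isolation comes from the two constraints at (p, q) = (0, 1)
   and (1, n), which force y >= x and y n <= 1 - x^2 = x n near x. *)

From Stdlib Require Import Reals Lra Lia ZArith.
Open Scope R_scope.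

Lemma INR_ge_1 (q : nat) : (1 <= q)%nat -> 1 <= INR q.
Proof. intros Hq; apply (le_INR 1); exact Hq. Qed.

Section SelfSimilarApproximation.

Variables (n : nat) (x : R) (w : nat -> R).

Hypothesis n_ge2 : (2 <= n)%nat.
Hypothesis x_gt0 : 0 < x.
Hypothesis x_root : INR n * x + x * x = 1.
Hypothesis w_ge1 : forall q, (1 <= q)%nat -> 1 <= w q.
Hypothesis w_mono : forall a b, (1 <= a)%nat -> (a <= b)%nat -> w a <= w b.
Hypothesis w_scale : forall p, (1 <= p)%nat -> w (n * p)%nat = w p / x.

Lemma div_weight_le (q : nat) : (1 <= q)%nat -> x / w q <= x.
Proof.
  intros Hq; pose proof (w_ge1 q Hq).
  apply Rmult_le_reg_r with (w q); [lra|].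
  unfold Rdiv; rewrite Rmult_assoc, Rinv_l by lra; nra.
Qed.

Lemma approx_small_denominator (p q : nat) :
  (q < n * p)%nat -> x <= INR p - x * INR q.
Proof.
  intros Hlt.
  assert (Hq1 : INR q + 1 <= INR n * INR p).
  { rewrite <- mult_INR, <- S_INR; apply le_INR; lia. }
  assert (x * INR q <= x * (INR n * INR p - 1)) by (apply Rmult_le_compat_l; lra).
  assert (0 <= INR p) by apply pos_INR.
  nra.
Qed.

Lemma approx_large_denominator (p q : nat) :
  (n * p <= q)%nat -> x * INR q - INR p = - x * (x * INR p - INR (q - n * p)).
Proof.
  intros Hle.
  rewrite minus_INR, mult_INR by exact Hle.
  replace (INR p) with (INR p * (INR n * x + x * x)) at 1 by (rewrite x_root; ring).
  ring.
Qed.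

Lemma approx_lower_bound (q : nat) :
  (1 <= q)%nat -> forall p : Z, Rabs (x * INR q - IZR p) >= x / w q.
Proof.
  induction q as [q IH] using (well_founded_induction lt_wf).
  intros Hq p.
  pose proof (div_weight_le q Hq).
  assert (Hq1 := INR_ge_1 q Hq).
  destruct (Z_le_gt_dec p 0) as [Hp | Hp].
  - apply IZR_le in Hp.
    pose proof (Rle_abs (x * INR q - IZR p)).
    nra.
  - set (p' := Z.to_nat p).
    assert (Hp' : (1 <= p')%nat) by (unfold p'; lia).
    replace (IZR p) with (INR p') by (unfold p'; rewrite INR_IZR_INZ, Z2Nat.id by lia; reflexivity).
    destruct (lt_dec q (n * p')) as [Hlt | Hge].
    + pose proof (approx_small_denominator p' q Hlt).
      rewrite Rabs_minus_sym; pose proof (Rle_abs (INR p' - x * INR q)).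
      lra.
    + assert (Hle : (n * p' <= q)%nat) by lia.
      assert (Hp'q : (p' < q)%nat) by (clearbody p'; nia).
      pose proof (IH p' Hp'q Hp' (Z.of_nat (q - n * p'))) as IHp.
      rewrite <- INR_IZR_INZ in IHp.
      rewrite (approx_large_denominator p' q Hle), Rabs_mult, Rabs_Ropp, (Rabs_pos_eq x)
        by lra.
      assert (Hw := w_mono (n * p') q ltac:(lia) Hle).
      rewrite w_scale in Hw by exact Hp'.
      pose proof (w_ge1 p' Hp').
      assert (Hscaled : x / w q <= x * (x / w p')).
      { replace (x * (x / w p')) with (x / (w p' / x)) by (field; lra).
        apply Rmult_le_compat_l; [lra|].
        apply Rinv_le_contravar; [apply Rdiv_lt_0_compat|]; lra. }
      assert (x * (x / w p') <= x * Rabs (x * INR p' - INR (q - n * p'))).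
      { apply Rmult_le_compat_l; lra. }
      lra.
Qed.

End SelfSimilarApproximation.

Lemma Rpower_1_l (tau : R) : Rpower 1 tau = 1.
Proof. unfold Rpower; rewrite ln_1, Rmult_0_r; apply exp_0. Qed.

Lemma Rpower_nat_ge1 (q : nat) (tau : R) : 0 <= tau -> (1 <= q)%nat -> 1 <= Rpower (INR q) tau.
Proof.
  intros Htau Hq.
  rewrite <- (Rpower_1_l tau) at 1.
  apply Rle_Rpower_l; [lra | split; [lra | apply INR_ge_1; exact Hq]].
Qed.

Lemma diophantine_of_root (n : nat) (x tau : R) :
  (2 <= n)%nat -> 0 < x -> INR n * x + x * x = 1 ->
  0 <= tau -> Rpower (INR n) tau = / x -> Diophantine x tau x.
Proof.
  intros hn Hx Hroot Htau Hpow_n p q Hq.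
  apply (approx_lower_bound n x (fun q => Rpower (INR q) tau)); auto.
  - intros; apply Rpower_nat_ge1; auto.
  - intros a b Ha Hab; apply Rle_Rpower_l; [lra | split].
    + pose proof (INR_ge_1 a Ha); lra.
    + apply le_INR; exact Hab.
  - intros p' Hp'; pose proof (INR_ge_1 p' Hp').
    assert (Hn : 2 <= INR n) by (apply (le_INR 2); exact hn).
    rewrite mult_INR, <- Rpower_mult_distr, Hpow_n by lra; field; lra.
Qed.

Lemma quadratic_root_bounds (m : R) :
  0 < m ->
  let alpha := (m + sqrt (m ^ 2 + 4)) / 2 in
  0 < alpha - m < 1 /\ (alpha - m) * alpha = 1.
Proof.
  intros Hm alpha.
  pose proof (sqrt_pos (m ^ 2 + 4)).
  assert (Hs2 : sqrt (m ^ 2 + 4) * sqrt (m ^ 2 + 4) = m ^ 2 + 4) by (apply sqrt_sqrt; nra).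
  unfold alpha; repeat split; nra.
Qed.

Lemma eq_of_diophantine_constraints (m x y : R) :
  0 < m -> m * x + x * x = 1 ->
  y >= x -> Rabs (y * m - 1) >= x * x -> Rabs (y - x) < x * x / m -> y = x.
Proof.
  intros Hm Hx Hyx Hym Hnear.
  assert (Hnear' : Rabs (y - x) * m < x * x).
  { apply Rmult_lt_compat_r with (r := m) in Hnear; [|exact Hm].
    unfold Rdiv in Hnear; rewrite Rmult_assoc, Rinv_l, Rmult_1_r in Hnear; lra. }
  pose proof (Rle_abs (y - x)).
  destruct (Rle_dec 0 (y * m - 1)).
  - rewrite Rabs_pos_eq in Hym by lra; nra.
  - rewrite Rabs_left in Hym by lra; nra.
Qed.

Theorem mainTheorem4 (n : nat) (hn : (2 <= n)%nat) :
  let alpha := (INR n + sqrt (INR n ^ 2 + 4)) / 2 in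
  let gamma := / alpha in
  let tau := ln alpha / ln (INR n) in
  0 < alpha - INR n < 1 /\
  isolated_point (fun xi => Diophantine gamma tau xi /\ 0 <= xi <= 1)
                 (alpha - INR n).
Proof.
  intros alpha gamma tau.
  assert (Hn : 2 <= INR n) by (apply (le_INR 2); exact hn).
  destruct (quadratic_root_bounds (INR n) ltac:(lra)) as [Hx Hxa]; fold alpha in Hx, Hxa.
  assert (Halpha : INR n < alpha) by lra.
  set (x := alpha - INR n) in *.
  assert (Hroot : INR n * x + x * x = 1).
  { rewrite <- Hxa; unfold x; ring. }
  assert (Hgamma : gamma = x).
  { unfold gamma; rewrite <- (Rmult_1_l (/ alpha)), <- Hxa; field; lra. }
  assert (Htau : 0 <= tau).
  { apply Rlt_le, Rdiv_lt_0_compat; rewrite <- ln_1; apply ln_increasing; lra. }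
  assert (Hpow_n : Rpower (INR n) tau = / x).
  { unfold Rpower, tau; replace (ln alpha / ln (INR n) * ln (INR n)) with (ln alpha).
    - rewrite exp_ln by lra; field_simplify_eq; lra.
    - field; apply Rgt_not_eq; rewrite <- ln_1; apply ln_increasing; lra. }
  split; [exact Hx |].
  split; [split; [rewrite Hgamma; apply diophantine_of_root with n; auto; lra | lra] |].
  exists (x * x / INR n); split; [apply Rdiv_lt_0_compat; nra |].
  intros y [Hy Hy01] Hnear.
  apply (eq_of_diophantine_constraints (INR n) x y); [lra | lra | | | exact Hnear].
  - pose proof (Hy 0%Z 1%nat ltac:(lia)) as H.
    simpl INR in H; rewrite Hgamma, Rpower_1_l, Rdiv_1_r, Rmult_1_r, Rminus_0_r in H.
    rewrite Rabs_pos_eq in H by lra; exact H.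
  - pose proof (Hy 1%Z n ltac:(lia)) as H.
    rewrite Hgamma, Hpow_n in H; replace (x / / x) with (x * x) in H by (field; lra).
    exact H.
Qed.
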